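(* Let $Q(k_1,\dots,k_d)$ be a positive definite diagonal quadratic form in $d\ge2$ variables with integer coefficients, and let $r_Q(n)$ denote the number of integral representations $Q(k_1,\dots,k_d)=n$. Then for every sufficiently small $\delta>0$ there is a constant $C_{d,\delta}$, depending only on $d$ and $\delta$ (and independent of the coefficients of $Q$ and of $n$), such that $r_Q(n)\le C_{d,\delta}\, n^{d/2-1+\delta}$ for all $n\in\mathbb N$. *)

From Stdlib Require Import Reals.
From mathcomp Require Import all_boot all_order all_algebra.

Set Implicit Arguments.
Unset Strict Implicit.
Unset Printing Implicit Defensive.

Definition diagQ (d : nat) (a : 'I_d -> int) (k : 'I_d -> int) : int :=
  (\sum_(i < d) a i * k i ^+ 2)%R.

(* For a positive definite diagonal form
   (all a_i >= 1) every solution satisfies |k_i| <= n, so the solution set is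
   contained in the box [-n, n]^d; we count over that box, encoding the
   coordinate k_i as  j - n  with  j : 'I_(2n+1). *)
Definition rQ (d : nat) (a : 'I_d -> int) (n : nat) : nat :=
  #|[set j : {ffun 'I_d -> 'I_(2 * n + 1)} |
     diagQ a (fun i => (Posz (j i) - Posz n)%R) == Posz n]|.

(* For a binary form a x^2 + b y^2 (a, b > 0) the number of representations of n
   is at most 25 d(n)^2, uniformly in a and b.  A prime dividing n and a
   coefficient is removed by a descent to n / p.  When a, b are coprime to n,
   the solutions are grouped by g = gcd(x, y), and the primitive solutions of
   m = n / g^2 by gcd(x y0 - x0 y, m) for a fixed primitive solution (x0, y0).
   Inside one group the identity
     (a x x' + b y y')^2 + a b (x y' - x' y)^2 = m^2
   holds with both brackets, doubled, divisible by m, so the pair of quotients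
   lies in [-2, 2]^2 and determines (x', y').  Since d(n) <= C_N n^(1/N),
   fixing the first coordinate (at most 3 sqrt n choices) and inducting on the
   dimension gives r_Q(n)^(2N) <= K n^((d-2)N + 1). *)

From Stdlib Require Import Reals Lra.
From mathcomp Require Import all_boot all_order all_algebra.
From mathcomp Require zify ring.

Set Implicit Arguments.
Unset Strict Implicit.
Unset Printing Implicit Defensive.

Local Open Scope R_scope.

Lemma INR_expn m n : INR (m ^ n)%N = INR m ^ n.
Proof. by elim: n => [|n IH]; rewrite ?expn0 // expnS mult_INR IH. Qed.

Lemma INR_le_Rpower_root (c K N e n : nat) :
  (0 < N)%N -> (0 < K)%N -> (0 < n)%N -> (c ^ N <= K * n ^ e)%N ->
  INR c <= Rpower (INR K) (/ INR N) * Rpower (INR n) (INR e / INR N).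
Proof.
move=> /ltP/lt_0_INR N_gt0 /ltP/lt_0_INR K_gt0 /ltP/lt_0_INR n_gt0 /leP/le_INR.
rewrite mult_INR !INR_expn => c_le.
have [->|c_neq0] := Req_dec (INR c) 0.
  by apply: Rlt_le; apply: Rmult_lt_0_compat; apply: exp_pos.
have c_gt0 : 0 < INR c by have := pos_INR c; lra.
have -> : INR c = Rpower (INR c ^ N) (/ INR N).
  by rewrite -Rpower_pow // Rpower_mult Rinv_r ?Rpower_1 //; lra.
apply: Rle_trans (Rle_Rpower_l _ _ _ _ (conj (pow_lt _ _ c_gt0) c_le)) _.
  by apply: Rlt_le; apply: Rinv_0_lt_compat.
rewrite -Rpower_mult_distr //; last exact: pow_lt.
by rewrite -(Rpower_pow e _ n_gt0) Rpower_mult; apply: Rle_refl.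
Qed.

Lemma root_exponent_le (k N : nat) (delta : R) : (0 < N)%N -> / INR N < delta ->
  INR (k * N + 1) / INR (2 * N) <= INR k.+2 / 2 - 1 + delta.
Proof.
move=> /ltP/lt_0_INR N_gt0 N_delta.
have two : INR 2 = 2 by rewrite /=; lra.
rewrite plus_INR !mult_INR two (S_INR k.+1) (S_INR k) /=.
have -> : (INR k * INR N + 1) / (2 * INR N) = INR k / 2 + / 2 * / INR N by field; lra.
have : 0 < / INR N by apply: Rinv_0_lt_compat.
lra.
Qed.

Local Close Scope R_scope.
(* Imported only now: algebra-tactics' [ring], [field] and [lra] would shadow
   the Stdlib tactics used on [R] above. *)
Import zify ring.

(** * The divisor bound *)

Definition ndivisors n := size (divisors n).

Lemma ndivisors_prime_decomp n : ndivisors n = \prod_(f <- prime_decomp n) f.2.+1.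
Proof.
rewrite /ndivisors /divisors; elim: (prime_decomp n) => [|[p e] pd IH] /=.
  by rewrite big_nil.
rewrite big_cons /= -IH.
by elim: e => [|e IHe] /=; rewrite ?mul1n // size_merge size_cat size_map IHe mulSn addnC.
Qed.

Lemma ndivisors_dvdn m n : m %| n -> 0 < n -> ndivisors m <= ndivisors n.
Proof.
move=> m_dvd_n n_gt0; have m_gt0 : 0 < m := dvdn_gt0 n_gt0 m_dvd_n.
apply: uniq_leq_size; first exact: divisors_uniq.
by move=> k; rewrite -!dvdn_divisors // => /dvdn_trans; apply.
Qed.

Lemma succn_expn_le N e : 0 < N -> e.+1 ^ N <= N ^ N * 2 ^ e.
Proof.
move=> N_gt0.
have e_le : e.+1 <= N * (e %/ N).+1 by have := ltn_ceil e N_gt0; lia.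
apply: leq_trans (_ : (N * 2 ^ (e %/ N)) ^ N <= _).
  by rewrite leq_exp2r // (leq_trans e_le) // leq_mul2l ltn_expl ?orbT.
by rewrite expnMn leq_mul2l -expnM leq_exp2l ?leq_divM ?orbT.
Qed.

Lemma succn_expn_le_large_base N e p : 2 ^ N <= p -> e.+1 ^ N <= p ^ e.
Proof.
case: N => [|N] N_le_p; first by rewrite expn_gt0 (leq_trans _ N_le_p).
apply: leq_trans (_ : (2 ^ e) ^ N.+1 <= _); first by rewrite leq_exp2r // ltn_expl.
by rewrite -expnM mulnC expnM; case: e => [|e]; rewrite // leq_exp2r.
Qed.

Lemma ndivisors_expn_le N n : 0 < N -> 0 < n -> ndivisors n ^ N <= (N ^ N) ^ (2 ^ N) * n.
Proof.
move=> N_gt0 n_gt0.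
have n_prod := prod_prime_decomp n_gt0; rewrite prime_decompE big_map /= in n_prod.
rewrite ndivisors_prime_decomp prime_decompE big_map /=.
have -> : (\prod_(p <- primes n) (logn p n).+1) ^ N = \prod_(p <- primes n) (logn p n).+1 ^ N.
  by elim: (primes n) => [|p s IH]; rewrite ?big_nil ?exp1n // !big_cons expnMn IH.
(* (e + 1)^N <= p^e as soon as p >= 2^N; each of the fewer than 2^N smaller
   primes costs a factor N^N. *)
pose c p := if p < 2 ^ N then N ^ N else 1.
apply: leq_trans (_ : \prod_(p <- primes n) (c p * p ^ logn p n) <= _).
  rewrite !big_seq; apply: leq_prod => p; rewrite mem_primes => /andP[p_pr _].
  rewrite /c; case: ifP => [_|/negbT]; last by rewrite -leqNgt mul1n => /succn_expn_le_large_base.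
  apply: leq_trans (succn_expn_le _ N_gt0) _; rewrite leq_mul2l.
  by case: (logn p n) => [|e]; rewrite ?orbT // leq_exp2r // prime_gt1 ?orbT.
rewrite big_split /= -n_prod leq_mul2r -big_mkcond /= big_const_seq iter_muln_1.
apply/orP; right; apply: leq_pexp2l; first by rewrite expn_gt0 N_gt0.
rewrite -size_filter -[leqRHS](size_iota 0 (2 ^ N)).
apply: uniq_leq_size; first by rewrite filter_uniq // primes_uniq.
by move=> p; rewrite mem_filter mem_iota => /andP[p_small _].
Qed.

(** * Counting by fibres *)

Lemma size_le_fibers (T K : eqType) (key : T -> K) (ks : seq K) c (s : seq T) :
  {subset map key s <= ks} ->
  (forall v, v \in s -> size [seq w <- s | key w == key v] <= c) ->
  size s <= c * size ks.
Proof.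
move=> key_s nonempty_fibers.
have fibers k : size [seq w <- s | key w == k] <= c.
  have [/hasP[v v_s /eqP <-]|] := boolP (has (fun w => key w == k) s).
    exact: nonempty_fibers.
  by rewrite has_filter negbK => /eqP ->.
elim: ks s key_s fibers {nonempty_fibers} => [|k ks IH] s key_s fibers.
  by case: s key_s {fibers} => // v s /(_ (key v)); rewrite mem_head => /(_ isT).
rewrite -(count_predC (fun v => key v == k)) mulnS -!size_filter leq_add //.
apply: IH => [z /mapP[v] | k'].
  rewrite mem_filter => /andP[kv vs] ->.
  by have := key_s _ (map_f key vs); rewrite inE (negbTE kv).
rewrite -filter_predI size_filter (leq_trans _ (fibers k')) // size_filter.
by apply: sub_count => v /andP[].
Qed.

Import Order.TTheory GRing.Theory Num.Theory.
Local Open Scope ring_scope.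

Lemma uniq_int_window_size (s : seq int) c :
  uniq s -> {in s, forall z, (`|z| <= c)%N} -> (size s <= c.*2.+1)%N.
Proof.
move=> s_uniq s_small; rewrite -(size_map (fun z : int => absz (z + c%:Z))) -(size_iota 0 c.*2.+1).
apply: uniq_leq_size => [|n /mapP[z /s_small z_small ->]]; last by rewrite mem_iota; lia.
rewrite map_inj_in_uniq // => z z' /s_small ? /s_small ? /(congr1 Posz).
rewrite !gez0_abs; lia.
Qed.

Lemma uniq_int_pairs_window_size (s : seq (int * int)) c :
  uniq s -> {in s, forall w, (`|w.1| <= c)%N /\ (`|w.2| <= c)%N} ->
  (size s <= c.*2.+1 * c.*2.+1)%N.
Proof.
move=> s_uniq s_small.
apply: leq_trans (@size_le_fibers _ _ fst (undup (map fst s)) c.*2.+1 s _ _) _ => [z|v _|].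
- by rewrite mem_undup.
- rewrite -(size_map snd); apply: uniq_int_window_size.
    rewrite map_inj_in_uniq ?filter_uniq // => -[x y] [x' y'].
    by rewrite !mem_filter => /andP[/eqP/= -> _] /andP[/eqP/= -> _] /= ->.
  by move=> z /mapP[w]; rewrite mem_filter => /andP[_ /s_small[_ +] ->].
rewrite leq_mul2l uniq_int_window_size ?undup_uniq ?orbT // => z.
by rewrite mem_undup => /mapP[w /s_small[]] + _ ->.
Qed.

(** * Binary diagonal forms *)

Definition binform (a b : int) (v : int * int) : int := a * v.1 ^+ 2 + b * v.2 ^+ 2.

Definition binpair (a b : int) (v w : int * int) : int := a * v.1 * w.1 + b * v.2 * w.2.

Definition cross (v w : int * int) : int := v.1 * w.2 - w.1 * v.2.

Lemma binform_swap a b x y : binform a b (x, y) = binform b a (y, x).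
Proof. by rewrite /binform addrC. Qed.

Lemma binform_composition a b v w :
  binpair a b v w ^+ 2 + a * b * cross v w ^+ 2 = binform a b v * binform a b w.
Proof. by rewrite /binpair /cross /binform; ring. Qed.

Lemma binform_binpair_cross_inj a b v w w' : binform a b v != 0 ->
  binpair a b v w = binpair a b v w' -> cross v w = cross v w' -> w = w'.
Proof.
move=> Qv_neq0 eB eC; rewrite [w]surjective_pairing [w']surjective_pairing.
congr pair; apply: (mulfI Qv_neq0).
  transitivity (v.1 * binpair a b v w - b * v.2 * cross v w).
    by rewrite /binpair /cross /binform; ring.
  by rewrite eB eC /binpair /cross /binform; ring.
transitivity (v.2 * binpair a b v w + a * v.1 * cross v w).
  by rewrite /binpair /cross /binform; ring.
by rewrite eB eC /binpair /cross /binform; ring.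
Qed.

Lemma binform_coprime_snd a b m x y :
  binform a b (x, y) = m -> coprimez x y -> coprimez a m -> coprimez y m.
Proof.
move=> rep_m cop_xy cop_am.
have cop_ya : coprimez y a.
  have gcd_m : (gcdz y a %| m)%Z.
    rewrite -rep_m; apply: rpredD; first exact: dvdz_mulr (dvdz_gcdr _ _).
    by rewrite expr2; apply/dvdz_mull/dvdz_mull/dvdz_gcdl.
  have : (gcdz y a %| gcdz a m)%Z by rewrite dvdz_gcd dvdz_gcdr gcd_m.
  by move: cop_am; rewrite /coprimez => /eqP ->; rewrite dvdz1.
have -> : m = (b * y) * y + a * x ^+ 2 by rewrite -rep_m /binform expr2; ring.
by rewrite /coprimez gcdzMDl Gauss_gcdzl ?coprimez_pexpr // coprimez_sym.
Qed.

Lemma binform_coprime_fst a b m x y :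
  binform a b (x, y) = m -> coprimez x y -> coprimez b m -> coprimez x m.
Proof. by rewrite binform_swap coprimez_sym; apply: binform_coprime_snd. Qed.

Lemma dvdz_mul_gcd (m P P' S : int) :
  (m %| P * S)%Z -> (gcdz P m %| P')%Z -> (m %| P' * S)%Z.
Proof.
move=> m_PS /dvdzP[q ->].
have : (m %| gcdz (P * S) (m * S))%Z by rewrite dvdz_gcd m_PS dvdz_mulr.
by rewrite -mulz_gcdl -mulrA !dvdzE !abszM /= => /dvdn_mull; apply.
Qed.

Lemma binform_dvd_cross_mul a b m v w0 :
  coprimez a m -> binform a b v = m -> binform a b w0 = m ->
  (m %| cross v w0 * (v.1 * w0.2 + w0.1 * v.2))%Z.
Proof.
move=> cop_am rep_v rep_w0; rewrite -(Gauss_dvdzr _ (_ : coprimez m a)) 1?coprimez_sym //.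
have -> : a * (cross v w0 * (v.1 * w0.2 + w0.1 * v.2)) =
          binform a b v * w0.2 ^+ 2 - binform a b w0 * v.2 ^+ 2.
  by rewrite /cross /binform; ring.
by rewrite rep_v rep_w0; apply: rpredB; apply/dvdz_mulr/dvdzz.
Qed.

Lemma binform_cross_dvd a b m w0 w w' :
  coprimez a m -> coprimez w.1 m -> coprimez w.2 m -> coprimez w0.2 m ->
  binform a b w0 = m -> binform a b w = m -> binform a b w' = m ->
  gcdz (cross w w0) m = gcdz (cross w' w0) m ->
  (m %| 2 * cross w w')%Z /\ (m %| 2 * binpair a b w w')%Z.
Proof.
move=> cop_am cop_x cop_y cop_y0 rep_w0 rep_w rep_w' same_gcd.
(* m divides P S for P = cross _ w0 and S below; equal gcds with m let the
   factors of w and w' be exchanged. *)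
pose S (v : int * int) := v.1 * w0.2 + w0.1 * v.2.
have m_PS : (m %| cross w w0 * S w)%Z := binform_dvd_cross_mul cop_am rep_w rep_w0.
have m_P'S' : (m %| cross w' w0 * S w')%Z := binform_dvd_cross_mul cop_am rep_w' rep_w0.
have m_PS' : (m %| cross w w0 * S w')%Z.
  by apply: dvdz_mul_gcd m_P'S' _; rewrite -same_gcd dvdz_gcdl.
have m_P'S : (m %| cross w' w0 * S w)%Z.
  by apply: dvdz_mul_gcd m_PS _; rewrite same_gcd dvdz_gcdl.
have m_cross : (m %| 2 * cross w w')%Z.
  have cop : coprimez m (w.1 * w0.2 ^+ 2).
    by rewrite coprimez_sym coprimezMl cop_x coprimezXl.
  rewrite -(Gauss_dvdzr _ cop).
  have -> : w.1 * w0.2 ^+ 2 * (2 * cross w w') =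
      2 * w'.2 * (cross w w0 * S w) - w.2 * (cross w w0 * S w') - w.2 * (cross w' w0 * S w).
    by rewrite /cross /S; ring.
  by apply: rpredB; [apply: rpredB|]; apply: dvdz_mull.
split=> //; rewrite -(Gauss_dvdzr _ (_ : coprimez m w.2)) 1?coprimez_sym //.
have -> : w.2 * (2 * binpair a b w w') = 2 * w'.2 * m - a * w.1 * (2 * cross w w').
  by rewrite -rep_w /binform /binpair /cross; ring.
by apply: rpredB; [apply/dvdz_mull/dvdzz | apply: dvdz_mull].
Qed.

Lemma absz_le2_of_norm_eq4 (a b y z : int) : 0 < a -> 0 < b ->
  y ^+ 2 + a * b * z ^+ 2 = 4 -> (`|y| <= 2)%N /\ (`|z| <= 2)%N.
Proof. by move=> *; split; nia. Qed.

Lemma binform_fiber_size a b m v t : 0 < a -> 0 < b -> 0 < m -> binform a b v = m ->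
  uniq t -> {in t, forall w, [/\ binform a b w = m, (m %| 2 * cross v w)%Z &
                                 (m %| 2 * binpair a b v w)%Z]} ->
  (size t <= 25)%N.
Proof.
move=> a_gt0 b_gt0 m_gt0 rep_v t_uniq t_fiber; have m_neq0 : m != 0 by rewrite gt_eqF.
pose phi w := ((2 * binpair a b v w) %/ m, (2 * cross v w) %/ m)%Z.
rewrite -(size_map phi); apply: (uniq_int_pairs_window_size (c := 2)).
  rewrite map_inj_in_uniq // => w w' /t_fiber[_ m_C m_B] /t_fiber[_ m_C' m_B'] [eB eC].
  apply: (binform_binpair_cross_inj (a := a) (b := b) (v := v)); first by rewrite rep_v.
    by apply: (@mulfI _ 2) => //; rewrite -(divzK m_B) -(divzK m_B') eB.
  by apply: (@mulfI _ 2) => //; rewrite -(divzK m_C) -(divzK m_C') eC.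
move=> _ /mapP[w /t_fiber[rep_w m_C m_B] ->] /=.
set beta := (_ %/ m)%Z; set gamma := (_ %/ m)%Z.
have comp := binform_composition a b v w; rewrite rep_v rep_w in comp.
have : beta ^+ 2 + a * b * gamma ^+ 2 = 4.
  apply: (@mulIf _ (m ^+ 2)); first by rewrite expf_neq0.
  have -> : (beta ^+ 2 + a * b * gamma ^+ 2) * m ^+ 2 =
            (beta * m) ^+ 2 + a * b * (gamma * m) ^+ 2 by ring.
  by rewrite !divzK // [m ^+ 2]expr2 -comp; ring.
exact: absz_le2_of_norm_eq4.
Qed.

Lemma binform_primitive_size a b m s : 0 < a -> 0 < b -> 0 < m ->
  coprimez a m -> coprimez b m ->
  uniq s -> {in s, forall w, binform a b w = m /\ coprimez w.1 w.2} ->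
  (size s <= 25 * ndivisors `|m|)%N.
Proof.
move=> a_gt0 b_gt0 m_gt0 cop_am cop_bm s_uniq s_prim.
case: s s_uniq s_prim => [|w0 s] // s_uniq s_prim.
have rep_w0 := (s_prim w0 (mem_head _ _)).1.
have cop_fst w : w \in w0 :: s -> coprimez w.1 m.
  by case: w => x y /s_prim[rep prim]; apply: binform_coprime_fst rep prim cop_bm.
have cop_snd w : w \in w0 :: s -> coprimez w.2 m.
  by case: w => x y /s_prim[rep prim]; apply: binform_coprime_snd rep prim cop_am.
pose key w := gcdn `|cross w w0| `|m|.
apply: (size_le_fibers (key := key)) => [_ /mapP[w _ ->]|v v_s].
  by rewrite -dvdn_divisors ?dvdn_gcdr // absz_gt0 gt_eqF.
have [rep_v _] := s_prim v v_s.
apply: (binform_fiber_size a_gt0 b_gt0 m_gt0 rep_v (filter_uniq _ s_uniq)) => w.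
rewrite mem_filter => /andP[/eqP same_key w_s]; have [rep_w _] := s_prim w w_s.
have [//|m_cross m_pair] := binform_cross_dvd (w0 := w0) (w' := w) cop_am (cop_fst v v_s)
  (cop_snd v v_s) (cop_snd w0 (mem_head _ _)) rep_w0 rep_v rep_w.
  by rewrite /gcdz -/(key v) -/(key w) same_key.
by split.
Qed.

Lemma binform_divz a b g w : (g %| w.1)%Z -> (g %| w.2)%Z ->
  binform a b ((w.1 %/ g)%Z, (w.2 %/ g)%Z) * g ^+ 2 = binform a b w.
Proof.
move=> /divzK g_x /divzK g_y; rewrite /binform -[in RHS]g_x -[in RHS]g_y /=.
by move: (w.1 %/ g)%Z (w.2 %/ g)%Z => x y; ring.
Qed.

Lemma coprimez_divz_gcd x y : gcdz x y != 0 ->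
  coprimez (x %/ gcdz x y)%Z (y %/ gcdz x y)%Z.
Proof.
move=> g_neq0; apply/eqP/(mulfI g_neq0); rewrite mulr1 -{1}[gcdz x y]gez0_abs //.
by rewrite mulz_gcdr ![gcdz x y * _]mulrC !divzK ?dvdz_gcdl ?dvdz_gcdr.
Qed.

Lemma binform_coprime_size a b n s : 0 < a -> 0 < b -> 0 < n ->
  coprimez a n -> coprimez b n ->
  uniq s -> {in s, forall w, binform a b w = n} ->
  (size s <= 25 * ndivisors `|n| * ndivisors `|n|)%N.
Proof.
move=> a_gt0 b_gt0 n_gt0 cop_an cop_bn s_uniq s_rep.
have n_neq0 : n != 0 by rewrite gt_eqF.
apply: (size_le_fibers (key := fun w => gcdn `|w.1| `|w.2|)) => [_ /mapP[w w_s ->]|v v_s].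
  rewrite -dvdn_divisors ?absz_gt0 // -(s_rep w w_s) -[gcdn _ _]/(absz (gcdz w.1 w.2)) -dvdzE.
  by apply: rpredD; apply: dvdz_mull; rewrite expr2 dvdz_mull ?dvdz_gcdl ?dvdz_gcdr.
set g := gcdn _ _; set t := [seq w <- s | _].
have t_fiber w : w \in t -> binform a b w = n /\ gcdz w.1 w.2 = g.
  by rewrite mem_filter => /andP[/eqP <- /s_rep].
have g_neq0 : g%:Z != 0.
  apply: contraTneq n_gt0 => /eqP; rewrite eqz_nat eqn0Ngt gcdn_gt0 !absz_gt0 negb_or !negbK.
  by case/andP=> /eqP x0 /eqP y0; rewrite -(s_rep v v_s) /binform x0 y0 expr2 !mulr0 addr0 ltxx.
pose psi (w : int * int) := ((w.1 %/ g)%Z, (w.2 %/ g)%Z).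
have g_dvd w : w \in t -> (g %| w.1)%Z /\ (g %| w.2)%Z.
  by move=> /t_fiber[_ <-]; rewrite dvdz_gcdl dvdz_gcdr.
have psi_rep w : w \in t -> binform a b (psi w) * g%:Z ^+ 2 = n.
  by move=> w_t; have [? ?] := g_dvd w w_t; rewrite binform_divz // (t_fiber w w_t).1.
set m := binform a b (psi v).
have n_def : m * g%:Z ^+ 2 = n by apply: psi_rep; rewrite mem_filter v_s andbT.
have m_gt0 : 0 < m by move: n_gt0; rewrite -n_def pmulr_lgt0 // exprn_gt0 // lt_def g_neq0.
have m_dvd_n : (`|m| %| `|n|)%N by rewrite -n_def abszM dvdn_mulr.
rewrite -(size_map psi).
apply: leq_trans (binform_primitive_size a_gt0 b_gt0 m_gt0 _ _ _ _) _.
- exact: coprimez_dvdr m_dvd_n cop_an.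
- exact: coprimez_dvdr m_dvd_n cop_bn.
- rewrite map_inj_in_uniq ?filter_uniq // => w w' /g_dvd[gx gy] /g_dvd[gx' gy'] [ex ey].
  rewrite [w]surjective_pairing [w']surjective_pairing.
  by rewrite -(divzK gx) -(divzK gx') -(divzK gy) -(divzK gy') ex ey.
- move=> _ /mapP[w w_t ->]; split.
    by apply: (mulIf (expf_neq0 2 g_neq0)); rewrite psi_rep // n_def.
  have [_ gcd_w] := t_fiber w w_t; rewrite /psi /= -gcd_w.
  by apply: coprimez_divz_gcd; rewrite gcd_w.
by rewrite leq_mul2l ndivisors_dvdn ?absz_gt0 ?orbT.
Qed.

(* "m has at most c representations", stated without forming the solution set. *)
Definition binform_reps_le (a b m : int) (c : nat) :=
  forall s, uniq s -> {in s, forall w, binform a b w = m} -> (size s <= c)%N.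

Lemma binform_reps_le_swap a b m c : binform_reps_le b a m c -> binform_reps_le a b m c.
Proof.
move=> reps_ba s s_uniq s_rep; rewrite -(size_map (fun w : int * int => (w.2, w.1))).
apply: reps_ba => [|_ /mapP[[x y] /s_rep rep_xy ->]]; last by rewrite -binform_swap.
by rewrite map_inj_uniq // => -[x y] [x' y'] [-> ->].
Qed.

Lemma binform_reps_le_mulr (a b m p : int) c : p != 0 ->
  binform_reps_le a b m c -> binform_reps_le (a * p) (b * p) (m * p) c.
Proof.
move=> p_neq0 reps s s_uniq s_rep; apply: reps s_uniq _ => w /s_rep rep_w.
by apply: (mulIf p_neq0); rewrite -rep_w /binform; ring.
Qed.

Lemma binform_reps_le_mulp (a b m : int) (p : nat) c : prime p -> ~~ (p %| b)%Z ->
  binform_reps_le a (b * p) m c -> binform_reps_le (a * p) b (m * p) c.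
Proof.
rewrite dvdzE => p_prime p_b reps s s_uniq s_rep.
have p_neq0 : p%:Z != 0 by rewrite eqz_nat -lt0n prime_gt0.
have p_y w : w \in s -> (p %| w.2)%Z.
  move=> /s_rep rep_w; have : (p %| b * w.2 ^+ 2)%Z.
    have -> : b * w.2 ^+ 2 = (m - a * w.1 ^+ 2) * p by rewrite mulrBl -rep_w /binform; ring.
    exact/dvdz_mull/dvdzz.
  by rewrite dvdzE abszM abszX Euclid_dvdM // (negbTE p_b) Euclid_dvdX // => /andP[].
rewrite -(size_map (fun w : int * int => (w.1, (w.2 %/ p)%Z))); apply: reps.
  rewrite map_inj_in_uniq // => -[x y] [x' y'] /p_y /divzK /= y_def /p_y /divzK /= y_def'.
  by case=> -> eq_y; rewrite -y_def -y_def' eq_y.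
move=> _ /mapP[w /[dup] /p_y /divzK y_def /s_rep rep_w ->]; apply: (mulIf p_neq0).
by rewrite -rep_w /binform /= -{2}y_def; ring.
Qed.

Lemma prime_dvd_of_not_coprimez (a : int) (n : nat) : a != 0 -> (0 < n)%N ->
  ~~ coprimez a n -> exists2 p, prime p & (p %| a)%Z && (p %| n)%N.
Proof.
move=> a_neq0 n_gt0; rewrite coprimez_sym coprimezE /= coprime_has_primes ?absz_gt0 //.
rewrite negbK => /hasP[p]; rewrite !mem_primes => /and3P[p_prime _ p_a] /and3P[_ _ p_n].
by exists p; rewrite // p_n andbT.
Qed.

Lemma binform_reps_le_descent (n p : nat) (a b : int) c : prime p -> (p %| n)%N ->
  (p %| a)%Z -> 0 < a -> 0 < b ->
  (forall a' b', 0 < a' -> 0 < b' -> binform_reps_le a' b' (n %/ p)%N c) ->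
  binform_reps_le a b n c.
Proof.
move=> p_prime p_n /divzK a_def a_gt0 b_gt0 reps.
have p_gt0 : 0 < p%:Z by rewrite ltz_nat prime_gt0.
have n_def : n%:Z = (n %/ p)%N%:Z * p by rewrite -PoszM divnK.
have a'_gt0 : 0 < (a %/ p)%Z by rewrite -(pmulr_lgt0 _ p_gt0) a_def.
rewrite -a_def n_def; have [/divzK b_def|p_b] := boolP (p %| b)%Z.
  rewrite -b_def; apply: binform_reps_le_mulr; first exact: lt0r_neq0.
  by apply: reps; rewrite // -(pmulr_lgt0 _ p_gt0) b_def.
by apply: binform_reps_le_mulp => //; apply: reps; rewrite // pmulr_lgt0.
Qed.

Lemma binform_reps_le_ndivisors (n : nat) (a b : int) : 0 < a -> 0 < b -> (0 < n)%N ->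
  binform_reps_le a b n (25 * ndivisors n * ndivisors n).
Proof.
elim/ltn_ind: n a b => n IH a b a_gt0 b_gt0 n_gt0.
have descent a' b' : 0 < a' -> 0 < b' -> ~~ coprimez a' n ->
    binform_reps_le a' b' n (25 * ndivisors n * ndivisors n).
  move=> a'_gt0 b'_gt0 /(prime_dvd_of_not_coprimez (lt0r_neq0 a'_gt0) n_gt0).
  case=> p p_prime /andP[p_a p_n]; apply: binform_reps_le_descent p_a a'_gt0 b'_gt0 _ => //.
  move=> a'' b'' a''_gt0 b''_gt0 s s_uniq s_rep.
  apply: leq_trans (IH _ _ _ _ a''_gt0 b''_gt0 _ s s_uniq s_rep) _.
  - by rewrite ltn_Pdiv ?prime_gt1.
  - by rewrite divn_gt0 ?prime_gt0 // dvdn_leq.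
  by have d_le := ndivisors_dvdn (dvdn_div p_n) n_gt0; rewrite leq_mul // leq_mul.
have [cop_a|] := boolP (coprimez a n); last exact: descent.
have [cop_b|] := boolP (coprimez b n).
  by move=> s; apply: (binform_coprime_size (n := n%:Z)).
by move/(descent b a b_gt0 a_gt0); apply: binform_reps_le_swap.
Qed.

(** * Diagonal forms in d variables *)

Definition rQbox d (a : 'I_d -> int) (M : nat) (m : int) : nat :=
  #|[set j : {ffun 'I_d -> 'I_(2 * M + 1)} | diagQ a (fun i => (j i)%:Z - M%:Z) == m]|.

Lemma diagQ_ge0 d (a : 'I_d -> int) k : (forall i, 0 < a i) -> 0 <= diagQ a k.
Proof. by move=> a_gt0; apply: sumr_ge0 => i _; apply: mulr_ge0 (ltW (a_gt0 i)) (sqr_ge0 _). Qed.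

Lemma rQbox_neg d (a : 'I_d -> int) M m : (forall i, 0 < a i) -> m < 0 -> rQbox a M m = 0%N.
Proof.
move=> a_gt0 m_lt0; apply: eq_card0 => j; rewrite inE; apply/negbTE.
by apply: contraTneq m_lt0 => <-; rewrite -leNgt diagQ_ge0.
Qed.

Lemma rQbox0 d (a : 'I_d -> int) M : (forall i, 0 < a i) -> (rQbox a M 0 <= 1)%N.
Proof.
move=> a_gt0; apply/card_le1_eqP => j j'; rewrite !inE.
have centered (j0 : {ffun 'I_d -> 'I_(2 * M + 1)}) i :
    diagQ a (fun i => (j0 i)%:Z - M%:Z) == 0 -> nat_of_ord (j0 i) = M.
  rewrite /diagQ psumr_eq0 => [/allP/(_ i (mem_index_enum i))|i' _]; last first.
    exact: mulr_ge0 (ltW (a_gt0 i')) (sqr_ge0 _).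
  by rewrite mulf_eq0 gt_eqF //= sqrf_eq0 subr_eq0 eqz_nat => /eqP.
by move=> Qj Qj'; apply/ffunP => i; apply: val_inj; rewrite /= !centered.
Qed.

Lemma rQbox_lift d (a : 'I_d.+1 -> int) M m :
  (rQbox a M m <= \sum_(j0 : 'I_(2 * M + 1))
     rQbox (fun i => a (lift ord0 i)) M (m - a ord0 * (j0%:Z - M%:Z) ^+ 2))%N.
Proof.
rewrite /rQbox -sum1_card (partition_big (fun j : {ffun _} => j ord0) predT) //=.
apply: leq_sum => j0 _; rewrite sum1dep_card.
pose tail (j : {ffun 'I_d.+1 -> 'I_(2 * M + 1)}) := [ffun i => j (lift ord0 i)].
set B := [set _ | _].
have tail_inj : {in B &, injective tail}.
  move=> j j'; rewrite !inE => /andP[_ /eqP j0_def] /andP[_ /eqP j0_def'] eq_tail.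
  apply/ffunP => i; case: (unliftP ord0 i) => [i'|] ->; last by rewrite j0_def j0_def'.
  by have := congr1 (fun g : {ffun _} => g i') eq_tail; rewrite !ffunE.
rewrite -(card_in_imset tail_inj); apply/subset_leq_card/subsetP => g /imsetP[j].
rewrite !inE => /andP[/eqP Qj /eqP j0_def] ->.
rewrite -Qj /diagQ big_ord_recl /= j0_def addrC addKr.
by apply/eqP/eq_bigr => i _; rewrite ffunE.
Qed.

Lemma rQbox2_le (a : 'I_2 -> int) M (n : nat) : (forall i, 0 < a i) -> (0 < n)%N ->
  (rQbox a M n <= 25 * ndivisors n * ndivisors n)%N.
Proof.
move=> a_gt0 n_gt0; rewrite /rQbox cardE.
pose coords (j : {ffun 'I_2 -> 'I_(2 * M + 1)}) :=
  ((j ord0)%:Z - M%:Z, (j (lift ord0 ord0))%:Z - M%:Z).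
rewrite -(size_map coords); apply: binform_reps_le_ndivisors => //.
  rewrite map_inj_uniq ?enum_uniq // => j j' [/addIr eq0 /addIr eq1].
  apply/ffunP => i; apply: val_inj; apply/eqP; rewrite -eqz_nat.
  by case: (unliftP ord0 i) => [i'|] ->; rewrite ?(ord1 i') ?eq0 ?eq1.
move=> w /mapP[j]; rewrite mem_enum inE => /eqP Qj ->.
by rewrite -Qj /diagQ !big_ord_recl big_ord0 addr0.
Qed.

Lemma card_sqr_centered_le (M n : nat) : (0 < n)%N ->
  (#|[set j : 'I_(2 * M + 1) | ((j%:Z - M%:Z) ^+ 2 <= n%:Z)%R]| ^ 2 <= 9 * n)%N.
Proof.
move=> n_gt0; have [sqrt_le lt_sqrt] := Nat.sqrt_spec' n.
have sqrt_gt0 : (0 < Nat.sqrt n)%N by nia.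
apply: leq_trans (_ : (Nat.sqrt n).*2.+1 ^ 2 <= _)%N; last by nia.
rewrite leq_exp2r // cardE -(size_map (fun j : 'I_(2 * M + 1) => j%:Z - M%:Z)).
apply: uniq_int_window_size.
  rewrite map_inj_uniq ?enum_uniq // => j j' /addIr /eqP.
  by rewrite eqz_nat => /eqP /val_inj.
by move=> z /mapP[j]; rewrite mem_enum inE => + ->; nia.
Qed.

Lemma sum_expn_le_card (I : finType) (B : {pred I}) (t : I -> nat) N K : (0 < N)%N ->
  {in [predC B], forall i, t i = 0%N} -> (forall i, t i ^ N <= K)%N ->
  ((\sum_i t i) ^ N <= #|B| ^ N * K)%N.
Proof.
move=> N_gt0 t_out t_le; set T := (\max_i t i)%N.
have T_le : (T ^ N <= K)%N.
  apply: (big_ind (fun x => x ^ N <= K)%N) => // [|x y]; first by rewrite exp0n.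
  by rewrite /maxn; case: ifP.
have sum_le : (\sum_i t i <= #|B| * T)%N.
  rewrite -sum_nat_const [leqRHS]big_mkcond /=; apply: leq_sum => i _.
  case: ifP => i_B; first exact: leq_bigmax.
  by rewrite t_out // inE i_B.
apply: leq_trans (_ : (#|B| * T) ^ N <= _)%N; first by rewrite leq_exp2r.
by rewrite expnMn leq_mul2l T_le orbT.
Qed.

Lemma rQbox2_expn_le N (a : 'I_2 -> int) M (n : nat) : (0 < N)%N ->
  (forall i, 0 < a i) -> (0 < n)%N ->
  (rQbox a M n ^ (2 * N) <= 25 ^ (2 * N) * ((4 * N) ^ (4 * N)) ^ (2 ^ (4 * N)) * n)%N.
Proof.
move=> N_gt0 a_gt0 n_gt0.
apply: leq_trans (_ : (25 * ndivisors n * ndivisors n) ^ (2 * N) <= _)%N.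
  by rewrite leq_exp2r ?muln_gt0 ?N_gt0 // rQbox2_le.
rewrite -mulnA expnMn.
have -> : ((ndivisors n * ndivisors n) ^ (2 * N) = ndivisors n ^ (4 * N))%N.
  by rewrite expnMn -expnD; congr expn; lia.
by rewrite -mulnA leq_mul2l ndivisors_expn_le ?orbT // muln_gt0 N_gt0.
Qed.

Lemma rQbox_lift_expn_le d N K e : (0 < N)%N -> (0 < K)%N ->
  (forall (a : 'I_d -> int), (forall i, 0 < a i) -> forall M (n : nat), (0 < n)%N ->
     (rQbox a M n ^ (2 * N) <= K * n ^ e.+1)%N) ->
  forall (a : 'I_d.+1 -> int), (forall i, 0 < a i) -> forall M (n : nat), (0 < n)%N ->
    (rQbox a M n ^ (2 * N) <= 9 ^ N * K * n ^ (N + e.+1))%N.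
Proof.
move=> N_gt0 K_gt0 IH a a_gt0 M n n_gt0.
pose t (j0 : 'I_(2 * M + 1)) :=
  rQbox (fun i => a (lift ord0 i)) M (n%:Z - a ord0 * (j0%:Z - M%:Z) ^+ 2).
pose B := [set j0 : 'I_(2 * M + 1) | ((j0%:Z - M%:Z) ^+ 2 <= n%:Z)%R].
have t_out : {in [predC B], forall j0, t j0 = 0%N}.
  move=> j0; rewrite !inE -ltNge => n_lt; apply: rQbox_neg => [i|]; first exact: a_gt0.
  by have := a_gt0 ord0; nia.
have t_le j0 : (t j0 ^ (2 * N) <= K * n ^ e.+1)%N.
  rewrite /t; set r := (n%:Z - _)%R.
  have r_le : (r <= n%:Z)%R by rewrite gerBl; apply: mulr_ge0 (ltW (a_gt0 _)) (sqr_ge0 _).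
  case: (ltrgtP r 0) => [r_lt0|r_gt0|->].
  - by rewrite rQbox_neg // exp0n ?muln_gt0 ?N_gt0.
  - have [r' r_def] : exists r' : nat, r = r' by exists `|r|%N; rewrite gez0_abs ?ltW.
    rewrite r_def; apply: leq_trans (IH _ (fun i => a_gt0 _) M r' _) _.
      by rewrite -ltz_nat -r_def.
    by rewrite leq_mul2l leq_exp2r // -lez_nat -r_def r_le orbT.
  - apply: leq_trans (_ : 1 <= _)%N; last by rewrite muln_gt0 K_gt0 expn_gt0 n_gt0.
    have := rQbox0 (a := fun i => a (lift ord0 i)) M (fun i => a_gt0 _).
    by rewrite leq_eqVlt ltnS leqn0 => /orP[] /eqP ->; rewrite ?exp1n ?exp0n ?muln_gt0 ?N_gt0.
apply: leq_trans (_ : (\sum_j0 t j0) ^ (2 * N) <= _)%N.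
  by rewrite leq_exp2r ?muln_gt0 ?N_gt0 // rQbox_lift.
apply: leq_trans (sum_expn_le_card _ t_out t_le) _; first by rewrite muln_gt0 N_gt0.
apply: leq_trans (_ : (9 * n) ^ N * (K * n ^ e.+1) <= _)%N.
  by rewrite leq_mul2r mulnC expnM leq_exp2r ?card_sqr_centered_le ?orbT.
by apply: eq_leq; rewrite [in RHS]expnD expnMn mulnACA.
Qed.

Lemma rQbox_expn_le N k : (0 < N)%N -> exists2 K : nat, (0 < K)%N &
  forall (a : 'I_k.+2 -> int), (forall i, 0 < a i) -> forall M (n : nat), (0 < n)%N ->
    (rQbox a M n ^ (2 * N) <= K * n ^ (k * N + 1))%N.
Proof.
move=> N_gt0; elim: k => [|k [K K_gt0 IH]].
  exists (25 ^ (2 * N) * ((4 * N) ^ (4 * N)) ^ (2 ^ (4 * N)))%N.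
    by rewrite muln_gt0 !expn_gt0 !muln_gt0 N_gt0.
  by move=> a a_gt0 M n n_gt0; rewrite mul0n add0n expn1 rQbox2_expn_le.
exists (9 ^ N * K)%N; first by rewrite muln_gt0 expn_gt0 K_gt0.
rewrite [(k.+1 * N)%N]mulSn -addnA addn1; apply: rQbox_lift_expn_le => // *.
by rewrite -[(k * N).+1]addn1 IH.
Qed.

Theorem lemma3p5 :
  forall d : nat, (2 <= d)%N ->
  exists delta0 : R, Rlt 0 delta0 /\
  forall delta : R, Rlt 0 delta -> Rlt delta delta0 ->
  exists C : R,
  forall (a : 'I_d -> int), (forall i, (0 < a i)%R) ->
  forall n : nat, (1 <= n)%N ->
    Rle (INR (rQ a n))
        (Rmult C (Rpower (INR n) (Rplus (Rminus (Rdiv (INR d) 2) 1) delta))).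
Proof.
move=> d d_ge2; exists R1; split=> [|delta delta_gt0 _]; first exact: Rlt_0_1.
have [N [N_delta /ssrnat.ltP N_gt0]] := archimed_cor1 delta delta_gt0.
case: d d_ge2 => [|[|k]] // _.
have [K K_gt0 rQ_le] := rQbox_expn_le k N_gt0.
exists (Rpower (INR K) (/ INR (2 * N))) => a a_gt0 n n_gt0.
(* [rQ a n] unfolds to [rQbox a n n]. *)
apply: Rle_trans (INR_le_Rpower_root _ K_gt0 n_gt0 (rQ_le a a_gt0 n n n_gt0)) _.
  by rewrite muln_gt0 N_gt0.
apply: Rmult_le_compat_l; first exact/Rlt_le/exp_pos.
apply: Rle_Rpower; last exact: root_exponent_le.
by apply: (le_INR 1); apply/ssrnat.leP.
Qed.
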